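(* Consider the plant $\dot x=f(x,z,u)$, $\epsilon\dot z=g(x,z,u)$ with feedback $u=k(x+e)$, and suppose: (1) $f$, $g$ and $k$ are globally Lipschitz; (2) Assumption A1 holds and the selected root $h$ is globally Lipschitz; (3) there exist symmetric positive definite matrices $P_1\in\mathbb{R}^{n_x\times n_x}$, $P_2\in\mathbb{R}^{n_y\times n_y}$ and constants $\bar\alpha_1,\alpha_2>0$ such that $V_x(x):=x^TP_1x$ and $V_y(x,y):=y^TP_2y$ satisfy, for all $(x,y,e)$, $$\tfrac{\partial V_x}{\partial x}f_s(x,0)\le-\bar\alpha_1V_x(x),\qquad \tfrac{\partial V_y}{\partial y}g_f(x,y,e)\le-\alpha_2V_y(x,y).$$ Then Assumptions A2, A3, A4, A5 and A6 are satisfied (with these $V_x,V_y$, with $\alpha_1=\bar\alpha_1/2$, and with $\gamma_1(s)=\bar\gamma_1s^2$, $\gamma_2(s)=\bar\gamma_2s^2$ for some constants $\bar\gamma_1,\bar\gamma_2\ge0$).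
   Context: Plant: $f:\mathbb{R}^{n_x}\times\mathbb{R}^{n_z}\times\mathbb{R}^{n_u}\to\mathbb{R}^{n_x}$, $g:\mathbb{R}^{n_x}\times\mathbb{R}^{n_z}\times\mathbb{R}^{n_u}\to\mathbb{R}^{n_z}$, $\epsilon>0$, $k:\mathbb{R}^{n_x}\to\mathbb{R}^{n_u}$; $n_y:=n_z$; $|\cdot|$ is the Euclidean norm (induced norm for matrices); $\mathcal{K}_\infty$ denotes continuous, zero-at-zero, strictly increasing, unbounded functions $\mathbb{R}_{\ge0}\to\mathbb{R}_{\ge0}$. Assumption A1: $g(x,z,u)=0$ has $n\ge1$ isolated real roots $z=h_i(x,u)$, each continuously differentiable; one root is fixed and denoted $h$. With $\frac{\partial h}{\partial x}$ the Jacobian of $h$ in its first argument at $(x,k(x+e))$ define: $f_x(x,y,e):=f(x,y+h(x,k(x+e)),k(x+e))$, $h_y(x,y,e):=y+h(x,k(x+e))-h(x,k(x))$, $f_s(x,e):=f(x,h(x,k(x+e)),k(x+e))$, $g_f(x,y,e):=g(x,y+h(x,k(x+e)),k(x+e))$. Assumption A2: there exist a $C^1$ function $V_x:\mathbb{R}^{n_x}\to\mathbb{R}_{\ge0}$, $\underline\alpha_x,\overline\alpha_x,\gamma_1\in\mathcal{K}_\infty$ ($\gamma_1$ continuously differentiable) and $\alpha_1>0$ with $\underline\alpha_x(|x|)\le V_x(x)\le\overline\alpha_x(|x|)$ and $\frac{\partial V_x}{\partial x}f_s(x,e)\le-\alpha_1V_x(x)+\gamma_1(|e|)$ for all $(x,e)$.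 Assumption A3: there exist a $C^1$ function $V_y:\mathbb{R}^{n_x}\times\mathbb{R}^{n_y}\to\mathbb{R}_{\ge0}$, $\underline\alpha_y,\overline\alpha_y\in\mathcal{K}_\infty$, $\alpha_2>0$ with $\underline\alpha_y(|y|)\le V_y(x,y)\le\overline\alpha_y(|y|)$ and $\frac{\partial V_y}{\partial y}g_f(x,y,e)\le-\alpha_2V_y(x,y)$ for all $(x,y,e)$. Assumption A4: there exist $\gamma_2\in\mathcal{K}_\infty$ and $\beta_1,\beta_2,\beta_3>0$ with, for all $(x,y,e)$, $\frac{\partial V_x}{\partial x}[f_x(x,y,e)-f_s(x,e)]\le\beta_1\sqrt{V_x(x)V_y(x,y)}$ and $[\frac{\partial V_y}{\partial x}-\frac{\partial V_y}{\partial y}\frac{\partial h}{\partial x}]f_x(x,y,e)\le\beta_2\sqrt{V_x(x)V_y(x,y)}+\beta_3V_y(x,y)+\gamma_2(|e|)$; and there is $L>0$ with $\gamma_2\circ\gamma_1^{-1}(s)\le Ls$ for all $s\ge0$. Assumption A5: there exist $\lambda_1,\lambda_2>0$ with $V_y(x,h_y(x,y,e))\le V_y(x,y)+\lambda_1\gamma_1(|e|)+\lambda_2\sqrt{\gamma_1(|e|)V_y(x,y)}$ for all $(x,y,e)$. Assumption A6: there exist $M,N\ge0$ such that for all $(x,y)$ and almost all $e$: $\langle\nabla|e|,-f_x(x,y,e)\rangle\le M|e|+N(\sqrt{V_x(x)}+\sqrt{V_y(x,y)})$. *)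

From Stdlib Require Import Reals.
From mathcomp Require Import ssreflect ssrfun ssrbool eqtype ssrnat fintype bigop.

Set Implicit Arguments.
Unset Strict Implicit.
Local Open Scope R_scope.

Definition vec (n : nat) := 'I_n -> R.
Definition mat (n : nat) := 'I_n -> 'I_n -> R.

Definition vzero {n} : vec n := fun _ => 0.
Definition vadd {n} (u v : vec n) : vec n := fun i => u i + v i.
Definition vsub {n} (u v : vec n) : vec n := fun i => u i - v i.
Definition vopp {n} (u : vec n) : vec n := fun i => - u i.
Definition vscale {n} (a : R) (u : vec n) : vec n := fun i => a * u i.

Definition dot {n} (u v : vec n) : R := \big[Rplus/0]_(i < n) (u i * v i).
Definition vnorm {n} (u : vec n) : R := sqrt (dot u u).
Definition norm2 {n1 n2} (a : vec n1) (b : vec n2) : R := sqrt (dot a a + dot b b).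
Definition norm3 {n1 n2 n3} (a : vec n1) (b : vec n2) (c : vec n3) : R :=
  sqrt (dot a a + dot b b + dot c c).

Definition quad {n} (P : mat n) (x : vec n) : R :=
  \big[Rplus/0]_(i < n) \big[Rplus/0]_(j < n) (x i * P i j * x j).

Definition sym_posdef {n} (P : mat n) : Prop :=
  (forall i j, P i j = P j i) /\ (forall x : vec n, x <> vzero -> 0 < quad P x).

Definition lipschitz1 {n m} (F : vec n -> vec m) : Prop :=
  exists L, forall x x', vnorm (vsub (F x) (F x')) <= L * vnorm (vsub x x').
Definition lipschitz2 {n1 n2 m} (F : vec n1 -> vec n2 -> vec m) : Prop :=
  exists L, forall x u x' u',
    vnorm (vsub (F x u) (F x' u')) <= L * norm2 (vsub x x') (vsub u u').
Definition lipschitz3 {n1 n2 n3 m} (F : vec n1 -> vec n2 -> vec n3 -> vec m) : Prop :=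
  exists L, forall x z u x' z' u',
    vnorm (vsub (F x z u) (F x' z' u')) <= L * norm3 (vsub x x') (vsub z z') (vsub u u').

Definition linear_vv {n m} (D : vec n -> vec m) : Prop :=
  forall c u v i, D (vadd (vscale c u) v) i = c * D u i + D v i.
Definition linear_vR {n} (D : vec n -> R) : Prop :=
  forall c u v, D (vadd (vscale c u) v) = c * D u + D v.
Definition linear_vvv {n1 n2 m} (D : vec n1 -> vec n2 -> vec m) : Prop :=
  forall c a b a' b' i,
    D (vadd (vscale c a) a') (vadd (vscale c b) b') i = c * D a b i + D a' b' i.
Definition linear_vvR {n1 n2} (D : vec n1 -> vec n2 -> R) : Prop :=
  forall c a b a' b',
    D (vadd (vscale c a) a') (vadd (vscale c b) b') = c * D a b + D a' b'.

Definition has_deriv {n m} (F : vec n -> vec m) (x : vec n) (D : vec n -> vec m) : Prop :=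
  linear_vv D /\
  forall eps, 0 < eps -> exists delta, 0 < delta /\ forall v, vnorm v < delta ->
    vnorm (vsub (vsub (F (vadd x v)) (F x)) (D v)) <= eps * vnorm v.

Definition has_derivR {n} (F : vec n -> R) (x : vec n) (D : vec n -> R) : Prop :=
  linear_vR D /\
  forall eps, 0 < eps -> exists delta, 0 < delta /\ forall v, vnorm v < delta ->
    Rabs (F (vadd x v) - F x - D v) <= eps * vnorm v.

Definition has_deriv2 {n1 n2 m} (F : vec n1 -> vec n2 -> vec m) (x : vec n1) (u : vec n2)
  (D : vec n1 -> vec n2 -> vec m) : Prop :=
  linear_vvv D /\
  forall eps, 0 < eps -> exists delta, 0 < delta /\ forall a b, norm2 a b < delta ->
    vnorm (vsub (vsub (F (vadd x a) (vadd u b)) (F x u)) (D a b)) <= eps * norm2 a b.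

Definition has_derivR2 {n1 n2} (F : vec n1 -> vec n2 -> R) (x : vec n1) (y : vec n2)
  (D : vec n1 -> vec n2 -> R) : Prop :=
  linear_vvR D /\
  forall eps, 0 < eps -> exists delta, 0 < delta /\ forall a b, norm2 a b < delta ->
    Rabs (F (vadd x a) (vadd y b) - F x y - D a b) <= eps * norm2 a b.

Definition C1_R {n} (F : vec n -> R) : Prop :=
  exists DF : vec n -> vec n -> R,
    (forall x, has_derivR F x (DF x)) /\
    (forall x eps, 0 < eps -> exists delta, 0 < delta /\ forall x',
       vnorm (vsub x' x) < delta -> forall v, Rabs (DF x' v - DF x v) <= eps * vnorm v).

Definition C1_R2 {n1 n2} (F : vec n1 -> vec n2 -> R) : Prop :=
  exists DF : vec n1 -> vec n2 -> vec n1 -> vec n2 -> R,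
    (forall x y, has_derivR2 F x y (DF x y)) /\
    (forall x y eps, 0 < eps -> exists delta, 0 < delta /\ forall x' y',
       norm2 (vsub x' x) (vsub y' y) < delta -> forall a b,
         Rabs (DF x' y' a b - DF x y a b) <= eps * norm2 a b).

Definition C1_2 {n1 n2 m} (F : vec n1 -> vec n2 -> vec m) : Prop :=
  exists DF : vec n1 -> vec n2 -> vec n1 -> vec n2 -> vec m,
    (forall x u, has_deriv2 F x u (DF x u)) /\
    (forall x u eps, 0 < eps -> exists delta, 0 < delta /\ forall x' u',
       norm2 (vsub x' x) (vsub u' u) < delta -> forall a b,
         vnorm (vsub (DF x' u' a b) (DF x u a b)) <= eps * norm2 a b).

Definition C1_fun (a : R -> R) : Prop :=
  exists d : R -> R, (forall s, derivable_pt_lim a s (d s)) /\ continuity d.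

Definition Kinf (a : R -> R) : Prop :=
  a 0 = 0 /\
  (forall s, 0 <= s -> 0 <= a s) /\
  (forall s t, 0 <= s -> s < t -> a s < a t) /\
  (forall s, 0 <= s -> forall eps, 0 < eps -> exists delta, 0 < delta /\
     forall t, 0 <= t -> Rabs (t - s) < delta -> Rabs (a t - a s) < eps) /\
  (forall M, exists s, 0 <= s /\ M < a s).

Section Plant.
Variables (nx nz nu : nat).
Variable f : vec nx -> vec nz -> vec nu -> vec nx.
Variable g : vec nx -> vec nz -> vec nu -> vec nz.
Variable h : vec nx -> vec nu -> vec nz.
Variable k : vec nx -> vec nu.

(* n_y := n_z *)
Definition f_x (x : vec nx) (y : vec nz) (e : vec nx) : vec nx :=
  f x (vadd y (h x (k (vadd x e)))) (k (vadd x e)).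
Definition h_y (x : vec nx) (y : vec nz) (e : vec nx) : vec nz :=
  vsub (vadd y (h x (k (vadd x e)))) (h x (k x)).
Definition f_s (x : vec nx) (e : vec nx) : vec nx :=
  f x (h x (k (vadd x e))) (k (vadd x e)).
Definition g_f (x : vec nx) (y : vec nz) (e : vec nx) : vec nz :=
  g x (vadd y (h x (k (vadd x e)))) (k (vadd x e)).

Definition Assumption_A1 : Prop :=
  exists (n : nat) (hs : 'I_n -> vec nx -> vec nu -> vec nz),
    (0 < n)%nat /\
    (forall i, C1_2 (hs i)) /\
    (forall x u z, g x z u = vzero <-> exists i, z = hs i x u) /\
    (forall x u i j, i <> j -> hs i x u <> hs j x u) /\
    (exists i0, h = hs i0).

Definition Assumption_A2 (Vx : vec nx -> R) (alpha1 : R) (gamma1 : R -> R) : Prop :=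
  C1_R Vx /\ (forall x, 0 <= Vx x) /\
  (exists aL aU, Kinf aL /\ Kinf aU /\
     forall x, aL (vnorm x) <= Vx x /\ Vx x <= aU (vnorm x)) /\
  Kinf gamma1 /\ C1_fun gamma1 /\ 0 < alpha1 /\
  (forall x e DVx, has_derivR Vx x DVx ->
     DVx (f_s x e) <= - alpha1 * Vx x + gamma1 (vnorm e)).

Definition Assumption_A3 (Vy : vec nx -> vec nz -> R) : Prop :=
  C1_R2 Vy /\ (forall x y, 0 <= Vy x y) /\
  exists aL aU alpha2, Kinf aL /\ Kinf aU /\ 0 < alpha2 /\
    (forall x y, aL (vnorm y) <= Vy x y /\ Vy x y <= aU (vnorm y)) /\
    (forall x y e DyVy, has_derivR (fun y' => Vy x y') y DyVy ->
       DyVy (g_f x y e) <= - alpha2 * Vy x y).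

Definition Assumption_A4 (Vx : vec nx -> R) (Vy : vec nx -> vec nz -> R)
  (gamma1 gamma2 : R -> R) : Prop :=
  Kinf gamma2 /\
  (exists b1 b2 b3, 0 < b1 /\ 0 < b2 /\ 0 < b3 /\
    (forall x y e DVx, has_derivR Vx x DVx ->
       DVx (vsub (f_x x y e) (f_s x e)) <= b1 * sqrt (Vx x * Vy x y)) /\
    (forall x y e DxVy DyVy Jh,
       has_derivR (fun x' => Vy x' y) x DxVy ->
       has_derivR (fun y' => Vy x y') y DyVy ->
       has_deriv (fun x' => h x' (k (vadd x e))) x Jh ->
       DxVy (f_x x y e) - DyVy (Jh (f_x x y e))
         <= b2 * sqrt (Vx x * Vy x y) + b3 * Vy x y + gamma2 (vnorm e))) /\
  (* gamma2 o gamma1^{-1} (t) <= L t for all t >= 0 *)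
  (exists L, 0 < L /\
    forall s t, 0 <= s -> gamma1 s = t -> gamma2 s <= L * t).

Definition Assumption_A5 (Vy : vec nx -> vec nz -> R) (gamma1 : R -> R) : Prop :=
  exists l1 l2, 0 < l1 /\ 0 < l2 /\
    forall x y e,
      Vy x (h_y x y e) <= Vy x y + l1 * gamma1 (vnorm e)
                          + l2 * sqrt (gamma1 (vnorm e) * Vy x y).

(* Assumption A6: for all e at which the gradient of |.| exists
   (i.e. almost all e), <grad|e|, -f_x> <= M|e| + N(sqrt Vx + sqrt Vy). *)
Definition Assumption_A6 (Vx : vec nx -> R) (Vy : vec nx -> vec nz -> R) : Prop :=
  exists M N, 0 <= M /\ 0 <= N /\
    forall x y e Dn, has_derivR (@vnorm nx) e Dn ->
      Dn (vopp (f_x x y e)) <= M * vnorm e + N * (sqrt (Vx x) + sqrt (Vy x y)).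

End Plant.

(* With V_x = x^T P1 x and V_y = y^T P2 y every assumption reduces to an inequality between
   quadratic expressions in |x|, |y|, |e|, sqrt V_x and sqrt V_y: positive definiteness gives
   c |x|^2 <= x^T P x <= |P| |x|^2, and global Lipschitz continuity of f, h and k bounds each
   perturbation term linearly.  Two points need an argument.  V_y does not depend on x, so its
   x-derivative vanishes in A4.  And f_s(0,0) = 0: the decrease of V_x along f_s(., 0), tested
   at x = t f_s(0,0) with t -> 0+, forces it; this makes |f_x(x,y,e)| linear in
   |x| + |y| + |e|.  In A2, Young's inequality splits the cross term 2 |P1| L |x| |e| into
   abar1 V_x / 2 + gbar1 |e|^2. *)

From Pilot Require Import Defs.
From Stdlib Require Import Reals Lra Psatz FunctionalExtensionality.
From mathcomp Require Import ssreflect ssrfun ssrbool eqtype ssrnat fintype bigop.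
From mathcomp Require Import Rstruct.

Set Implicit Arguments.
Unset Strict Implicit.
Local Open Scope R_scope.

(** * Real arithmetic, finite sums and the Euclidean norm *)

Lemma Rdiv_le_0_compat a b : 0 <= a -> 0 < b -> 0 <= a / b.
Proof. by move=> Ha Hb; apply: Rmult_le_pos => //; apply/Rlt_le/Rinv_0_lt_compat. Qed.

Lemma Rmult_lt_of_lt_div a b c : b < c / a -> 0 < a -> a * b < c.
Proof.
move=> b_lt a_gt0; have := Rmult_lt_compat_l a _ _ a_gt0 b_lt.
by rewrite (_ : a * (c / a) = c) //; field; lra.
Qed.

Lemma Rdiv_succ_lt1 x : 0 <= x -> x / (x + 1) < 1.
Proof.
move=> x_ge0; apply: (Rmult_lt_reg_r (x + 1)); first lra.
by rewrite /Rdiv Rmult_assoc Rinv_l; lra.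
Qed.

Lemma Rle_0_of_le_pos_mul a K : 0 <= K -> (forall t, 0 < t -> a <= t * K) -> a <= 0.
Proof.
move=> K_ge0 a_le; apply: Rle_plus_epsilon => eps eps_gt0; rewrite Rplus_0_l.
have := a_le (eps / (K + 1)) ltac:(apply: Rdiv_lt_0_compat; lra).
have -> : eps / (K + 1) * K = eps * (K / (K + 1)) by field; lra.
by have := Rdiv_succ_lt1 K_ge0; nra.
Qed.

Section Rsums.
Variable n : nat.
Implicit Types F G : 'I_n -> R.

Lemma Rsum_le F G : (forall i, F i <= G i) ->
  \big[Rplus/0]_(i < n) F i <= \big[Rplus/0]_(i < n) G i.
Proof. by move=> H; apply: (big_ind2 Rle) => // *; lra. Qed.

Lemma Rsum_ge0 F : (forall i, 0 <= F i) -> 0 <= \big[Rplus/0]_(i < n) F i.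
Proof. by move=> H; apply: (big_ind (Rle 0)) => // *; lra. Qed.

Lemma Rabs_Rsum_le F :
  Rabs (\big[Rplus/0]_(i < n) F i) <= \big[Rplus/0]_(i < n) Rabs (F i).
Proof.
apply: (big_ind2 (fun a b => Rabs a <= b)); first by rewrite Rabs_R0; lra.
  by move=> a b c d H1 H2; apply: Rle_trans (Rabs_triang _ _) _; lra.
by move=> *; lra.
Qed.

Lemma Rsum_ge_term F j : (forall i, 0 <= F i) -> F j <= \big[Rplus/0]_(i < n) F i.
Proof.
move=> H; rewrite (bigD1 j) //=.
rewrite -{1}[F j]Rplus_0_r; apply: Rplus_le_compat_l.
by apply: (big_ind (Rle 0)) => // *; lra.
Qed.

End Rsums.

Section Euclid.
Variable n : nat.
Implicit Types u v w : vec n.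

Lemma dot_ge0 u : 0 <= dot u u.
Proof. by apply: Rsum_ge0 => i; nra. Qed.

Lemma vnorm_ge0 u : 0 <= vnorm u.
Proof. exact: sqrt_pos. Qed.

Lemma vnorm_sq u : vnorm u * vnorm u = dot u u.
Proof. exact: sqrt_sqrt (dot_ge0 u). Qed.

Lemma vnorm_ext u v : (forall i, u i = v i) -> vnorm u = vnorm v.
Proof. by move=> H; rewrite /vnorm /dot; congr sqrt; apply: eq_bigr => i _; rewrite H. Qed.

Lemma vnorm_le u r : 0 <= r -> dot u u <= r * r -> vnorm u <= r.
Proof. by move=> Hr H; rewrite -(sqrt_square r Hr); apply: sqrt_le_1_alt. Qed.

Lemma Rabs_coord_le_vnorm u i : Rabs (u i) <= vnorm u.
Proof.
have : u i * u i <= dot u u by apply: (@Rsum_ge_term _ (fun j => u j * u j)) => j; nra.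
rewrite -vnorm_sq => Hsq.
by rewrite -[vnorm u]Rabs_right; [exact: Rsqr_le_abs_0 | apply/Rle_ge/vnorm_ge0].
Qed.

Lemma dot_expand u v t :
  dot (fun i => u i + t * v i) (fun i => u i + t * v i)
  = dot u u + 2 * t * dot u v + t * t * dot v v.
Proof.
rewrite /dot (eq_bigr (fun i => u i * u i + (2 * t) * (u i * v i) + (t * t) * (v i * v i)));
  last by move=> i _; ring.
by rewrite !big_split /= -!big_distrr.
Qed.

(* Cauchy-Schwarz: evaluate t |-> |u + t v|^2 at its minimum t = - u.v / v.v. *)
Lemma dot_sq_le u v : dot u v * dot u v <= dot u u * dot v v.
Proof.
have [Hv0|Hv] : dot v v = 0 \/ 0 < dot v v by have := dot_ge0 v; lra.
  have Hv0i i : v i = 0.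
    have : v i * v i <= dot v v by apply: (@Rsum_ge_term _ (fun j => v j * v j)) => j; nra.
    rewrite Hv0; nra.
  suff -> : dot u v = 0 by rewrite Hv0; lra.
  by apply: big1 => i _; rewrite Hv0i; ring.
have := dot_ge0 (fun i => u i + (- (dot u v / dot v v)) * v i).
rewrite dot_expand.
have -> : dot u u + 2 * - (dot u v / dot v v) * dot u v
          + - (dot u v / dot v v) * - (dot u v / dot v v) * dot v v
          = (dot u u * dot v v - dot u v * dot u v) / dot v v by field; lra.
move=> H; have := Rmult_le_pos _ _ H (Rlt_le _ _ Hv).
by rewrite /Rdiv Rmult_assoc Rinv_l; lra.
Qed.

Lemma Rabs_dot_le u v : Rabs (dot u v) <= vnorm u * vnorm v.
Proof.
apply: Rsqr_incr_0_var; last by apply: Rmult_le_pos; apply: vnorm_ge0.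
by rewrite -Rsqr_abs Rsqr_mult /Rsqr !vnorm_sq; exact: dot_sq_le.
Qed.

Lemma vnorm_triang u v : vnorm (vadd u v) <= vnorm u + vnorm v.
Proof.
apply: vnorm_le; first by have := vnorm_ge0 u; have := vnorm_ge0 v; lra.
have -> : dot (vadd u v) (vadd u v) = dot u u + 2 * 1 * dot u v + 1 * 1 * dot v v.
  by rewrite -dot_expand; apply: eq_bigr => i _; rewrite /vadd; ring.
have := Rabs_dot_le u v; have := Rle_abs (dot u v).
rewrite -!vnorm_sq; nra.
Qed.

Lemma vnorm_scale c u : vnorm (vscale c u) = Rabs c * vnorm u.
Proof.
have E : dot (vscale c u) (vscale c u) = (c * c) * dot u u.
  by rewrite /dot big_distrr /=; apply: eq_bigr => i _; rewrite /vscale; ring.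
rewrite /vnorm E sqrt_mult; [by rewrite sqrt_Rsqr_abs | nra | exact: dot_ge0].
Qed.

Lemma vnorm_opp u : vnorm (vopp u) = vnorm u.
Proof.
rewrite (@vnorm_ext _ (vscale (-1) u)) ?vnorm_scale ?Rabs_Ropp ?Rabs_R1; first lra.
by move=> i; rewrite /vopp /vscale; ring.
Qed.

Lemma vnorm_sub_self u : vnorm (vsub u u) = 0.
Proof.
rewrite /vnorm (_ : dot _ _ = 0) ?sqrt_0 //.
by apply: big1 => i _; rewrite /vsub; ring.
Qed.

Lemma vnorm_sub0 u : vnorm (vsub u vzero) = vnorm u.
Proof. by apply: vnorm_ext => i; rewrite /vsub /vzero; ring. Qed.

Lemma vnorm_addKr u v : vnorm (vsub (vadd u v) v) = vnorm u.
Proof. by apply: vnorm_ext => i; rewrite /vsub /vadd; ring. Qed.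

Lemma vnorm_addKl u v : vnorm (vsub (vadd u v) u) = vnorm v.
Proof. by apply: vnorm_ext => i; rewrite /vsub /vadd; ring. Qed.

Lemma vnorm_le_sub u v : vnorm u <= vnorm (vsub u v) + vnorm v.
Proof.
rewrite (@vnorm_ext u (vadd (vsub u v) v)); first exact: vnorm_triang.
by move=> i; rewrite /vadd /vsub; ring.
Qed.

Lemma vnorm_sub_add u v u' v' :
  vnorm (vsub (vadd u v) (vadd u' v')) <= vnorm (vsub u u') + vnorm (vsub v v').
Proof.
rewrite (@vnorm_ext _ (vadd (vsub u u') (vsub v v'))); first exact: vnorm_triang.
by move=> i; rewrite /vadd /vsub; ring.
Qed.

End Euclid.

Lemma norm2_le n1 n2 (a : vec n1) (b : vec n2) : norm2 a b <= vnorm a + vnorm b.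
Proof.
have := vnorm_ge0 a; have := vnorm_ge0 b => Hb Ha.
rewrite /norm2 -(vnorm_sq a) -(vnorm_sq b) -(sqrt_square (vnorm a + vnorm b)); last lra.
by apply: sqrt_le_1_alt; nra.
Qed.

Lemma norm3_le n1 n2 n3 (a : vec n1) (b : vec n2) (c : vec n3) :
  norm3 a b c <= vnorm a + vnorm b + vnorm c.
Proof.
have := vnorm_ge0 a; have := vnorm_ge0 b; have := vnorm_ge0 c => Hc Hb Ha.
rewrite /norm3 -(vnorm_sq a) -(vnorm_sq b) -(vnorm_sq c).
rewrite -(sqrt_square (vnorm a + vnorm b + vnorm c)); last lra.
by apply: sqrt_le_1_alt; nra.
Qed.

Lemma norm2_ge_r n1 n2 (a : vec n1) (b : vec n2) : vnorm b <= norm2 a b.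
Proof. by apply: sqrt_le_1_alt; have := dot_ge0 a; lra. Qed.

Lemma norm2_0r n1 n2 (a : vec n1) (b : vec n2) : (forall i, b i = 0) -> norm2 a b = vnorm a.
Proof.
move=> Hb; rewrite /norm2 /vnorm (_ : dot b b = 0) ?Rplus_0_r //.
by apply: big1 => i _; rewrite Hb; ring.
Qed.

(** * Quadratic forms *)

Definition bform n (P : mat n) (u v : vec n) : R :=
  \big[Rplus/0]_(i < n) \big[Rplus/0]_(j < n) (u i * P i j * v j).

Definition mat_abs_sum n (P : mat n) : R :=
  \big[Rplus/0]_(i < n) \big[Rplus/0]_(j < n) Rabs (P i j).

Section BilinearForm.
Variables (n : nat) (P : mat n).
Implicit Types u v a b x : vec n.

Lemma bform_ext u v u' v' : (forall i, u i = u' i) -> (forall i, v i = v' i) ->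
  bform P u v = bform P u' v'.
Proof.
by move=> Hu Hv; apply: eq_bigr => i _; apply: eq_bigr => j _; rewrite Hu Hv.
Qed.

Lemma bform_linr x c a b : bform P x (fun i => c * a i + b i) = c * bform P x a + bform P x b.
Proof.
rewrite /bform big_distrr -big_split /=; apply: eq_bigr => i _.
by rewrite big_distrr -big_split /=; apply: eq_bigr => j _; ring.
Qed.

Lemma bform_linl x c a b : bform P (fun i => c * a i + b i) x = c * bform P a x + bform P b x.
Proof.
rewrite /bform big_distrr -big_split /=; apply: eq_bigr => i _.
by rewrite big_distrr -big_split /=; apply: eq_bigr => j _; ring.
Qed.

Lemma bform_subr x a b : bform P x (vsub a b) = bform P x a - bform P x b.
Proof.
rewrite (@bform_ext x _ x (fun i => -1 * b i + a i)) // ?bform_linr; first ring.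
by move=> i; rewrite /vsub; ring.
Qed.

Lemma bform_subl x a b : bform P (vsub a b) x = bform P a x - bform P b x.
Proof.
rewrite (@bform_ext _ x (fun i => -1 * b i + a i) x) // ?bform_linl; first ring.
by move=> i; rewrite /vsub; ring.
Qed.

Lemma bform_scalel t a x : bform P (vscale t a) x = t * bform P a x.
Proof.
rewrite /bform big_distrr /=; apply: eq_bigr => i _.
by rewrite big_distrr /=; apply: eq_bigr => j _; rewrite /vscale; ring.
Qed.

Lemma mat_abs_sum_ge0 : 0 <= mat_abs_sum P.
Proof. by apply: Rsum_ge0 => i; apply: Rsum_ge0 => j; exact: Rabs_pos. Qed.

Lemma Rabs_bform_le u v : Rabs (bform P u v) <= mat_abs_sum P * vnorm u * vnorm v.
Proof.
rewrite /mat_abs_sum Rmult_assoc big_distrl /=.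
apply: Rle_trans (Rabs_Rsum_le _) _; apply: Rsum_le => i.
rewrite big_distrl /=; apply: Rle_trans (Rabs_Rsum_le _) _; apply: Rsum_le => j.
have := Rabs_coord_le_vnorm u i; have := Rabs_coord_le_vnorm v j.
have := Rabs_pos (u i); have := Rabs_pos (v j); have := Rabs_pos (P i j).
rewrite !Rabs_mult => *.
rewrite (Rmult_comm _ (Rabs (P i j))) Rmult_assoc; apply: Rmult_le_compat_l => //.
by apply: Rmult_le_compat.
Qed.

Lemma quad_le x : quad P x <= mat_abs_sum P * (vnorm x * vnorm x).
Proof. by rewrite -Rmult_assoc; apply: Rle_trans (Rle_abs _) (Rabs_bform_le x x). Qed.

Hypothesis P_sym : forall i j, P i j = P j i.

Lemma bform_sym u v : bform P u v = bform P v u.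
Proof.
rewrite /bform exchange_big /=; apply: eq_bigr => i _; apply: eq_bigr => j _.
by rewrite P_sym; ring.
Qed.

Lemma quad_add x v : quad P (fun i => x i + v i) = quad P x + 2 * bform P x v + quad P v.
Proof.
rewrite /quad -/(bform P _ _) -/(bform P x x) -/(bform P v v).
rewrite (@bform_ext _ _ (fun i => 1 * x i + v i) (fun i => 1 * x i + v i)) => [|i|i]; try ring.
by rewrite bform_linl !bform_linr (bform_sym v x); ring.
Qed.

End BilinearForm.

Lemma Rsum2_ord_recl n (F : 'I_n.+1 -> 'I_n.+1 -> R) :
  \big[Rplus/0]_(i < n.+1) \big[Rplus/0]_(j < n.+1) F i j =
  F ord0 ord0 + \big[Rplus/0]_(j < n) F ord0 (lift ord0 j)
  + \big[Rplus/0]_(i < n) F (lift ord0 i) ord0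
  + \big[Rplus/0]_(i < n) \big[Rplus/0]_(j < n) F (lift ord0 i) (lift ord0 j).
Proof.
rewrite big_ord_recl (eq_bigr (fun i => F (lift ord0 i) ord0 +
  \big[Rplus/0]_(j < n) F (lift ord0 i) (lift ord0 j))); last by move=> i _; rewrite big_ord_recl.
by rewrite big_split big_ord_recl /=; ring.
Qed.

Lemma Rsum2_mul n (F G : 'I_n -> R) :
  \big[Rplus/0]_(i < n) \big[Rplus/0]_(j < n) (F i * G j) =
  (\big[Rplus/0]_(i < n) F i) * (\big[Rplus/0]_(j < n) G j).
Proof. by rewrite big_distrl /=; apply: eq_bigr => i _; rewrite big_distrr. Qed.

Definition vtail n (x : vec n.+1) : vec n := fun i => x (lift ord0 i).

Definition schur n (P : mat n.+1) : mat n :=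
  fun i j => P (lift ord0 i) (lift ord0 j) - vtail (P ord0) i * vtail (P ord0) j / P ord0 ord0.

Section Schur.
Variables (n : nat) (P : mat n.+1).
Hypothesis P_sym : forall i j, P i j = P j i.
Let a := P ord0 ord0.
Let b := vtail (P ord0).

Lemma quad_schur x : a <> 0 ->
  quad P x = a * ((x ord0 + dot b (vtail x) / a) * (x ord0 + dot b (vtail x) / a))
             + quad (schur P) (vtail x).
Proof.
move=> a_neq0; rewrite /quad Rsum2_ord_recl.
have -> : \big[Rplus/0]_(i < n) \big[Rplus/0]_(j < n) (vtail x i * schur P i j * vtail x j)
  = \big[Rplus/0]_(i < n) \big[Rplus/0]_(j < n)
      (x (lift ord0 i) * P (lift ord0 i) (lift ord0 j) * x (lift ord0 j))
    + - / a * \big[Rplus/0]_(i < n) \big[Rplus/0]_(j < n) ((b i * vtail x i) * (b j * vtail x j)).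
  rewrite big_distrr -big_split /=; apply: eq_bigr => i _.
  rewrite big_distrr -big_split /=; apply: eq_bigr => j _.
  by rewrite /schur /b /vtail -/a; field.
rewrite Rsum2_mul.
have E0j : \big[Rplus/0]_(j < n) (x ord0 * P ord0 (lift ord0 j) * x (lift ord0 j))
           = x ord0 * dot b (vtail x).
  by rewrite /dot big_distrr /=; apply: eq_bigr => j _; rewrite /b /vtail; ring.
have Ei0 : \big[Rplus/0]_(i < n) (x (lift ord0 i) * P (lift ord0 i) ord0 * x ord0)
           = x ord0 * dot b (vtail x).
  by rewrite /dot big_distrr /=; apply: eq_bigr => i _; rewrite /b /vtail P_sym; ring.
by rewrite E0j Ei0 -/a /dot; field.
Qed.

End Schur.

Section SchurPosdef.
Variables (n : nat) (P : mat n.+1).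
Hypothesis P_pd : sym_posdef P.

Lemma posdef_corner_gt0 : 0 < P ord0 ord0.
Proof.
pose e0 : vec n.+1 := fun j => if j == ord0 then 1 else 0.
have e0_lift i : e0 (lift ord0 i) = 0 by rewrite /e0 eq_sym (negbTE (neq_lift ord0 i)).
have <- : quad P e0 = P ord0 ord0.
  rewrite /quad Rsum2_ord_recl !big1 => [|i _|i _|j _]; rewrite ?e0_lift; try ring.
  - by rewrite /e0 eqxx; ring.
  - by apply: big1 => j _; rewrite e0_lift; ring.
apply: (proj2 P_pd) => E.
by have := f_equal (fun v => v ord0) E; rewrite /vzero /e0 eqxx; lra.
Qed.

Lemma schur_posdef : sym_posdef (schur P).
Proof.
have [P_sym P_pos] := P_pd; have a_neq0 := Rgt_not_eq _ _ posdef_corner_gt0.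
split=> [i j|y y_neq0]; first by rewrite /schur /vtail P_sym Rmult_comm.
(* the vector (-(b.y)/a, y) annihilates the square in quad_schur *)
pose x : vec n.+1 := fun j =>
  if unlift ord0 j is Some i then y i else - (dot (vtail (P ord0)) y / P ord0 ord0).
have x_tail : vtail x = y by apply: functional_extensionality => i; rewrite /x /vtail liftK.
have x_neq0 : x <> vzero by move=> E; apply: y_neq0; rewrite -x_tail E.
have := P_pos x x_neq0; rewrite quad_schur // x_tail /x unlift_none.
by rewrite Rplus_opp_l Rmult_0_l Rmult_0_r Rplus_0_l.
Qed.

End SchurPosdef.

Definition coercive n (P : mat n) (c : R) : Prop := forall x, c * dot x x <= quad P x.

(* Induction on the dimension through the Schur complement. *)
Lemma quad_coercive n (P : mat n) : sym_posdef P -> exists c, 0 < c /\ coercive P c.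
Proof.
elim: n P => [|n IH] P P_pd.
  by exists 1; split=> [|x]; [lra | rewrite /dot /quad !big_ord0; lra].
set a := P ord0 ord0; set b := vtail (P ord0).
have a_gt0 : 0 < a := posdef_corner_gt0 P_pd.
have [c' [c'_gt0 schur_ge]] := IH _ (schur_posdef P_pd).
set M := 1 + 2 * (dot b b / (a * a)).
have M_ge1 : 1 <= M.
  have : 0 <= dot b b / (a * a) by apply: Rdiv_le_0_compat; [exact: dot_ge0 | nra].
  by rewrite /M; lra.
(* with w = x0 + b.x'/a, quad P x = a w^2 + quad (schur P) x', and x0^2 <= 2 w^2 + 2 (b.x'/a)^2 *)
exists (Rmin (a / 2) (c' / M)); split=> [|x].
  by apply: Rmin_pos; apply: Rdiv_lt_0_compat; lra.
have c_gt0 : 0 < Rmin (a / 2) (c' / M) by apply: Rmin_pos; apply: Rdiv_lt_0_compat; lra.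
have c_le : Rmin (a / 2) (c' / M) <= a / 2 := Rmin_l _ _.
have cM_le : Rmin (a / 2) (c' / M) * M <= c'.
  have := Rmult_le_compat_r M _ _ ltac:(lra) (Rmin_r (a / 2) (c' / M)).
  by rewrite /Rdiv Rmult_assoc Rinv_l ?Rmult_1_r; lra.
set c := Rmin _ _ in c_gt0 c_le cM_le *.
rewrite quad_schur -/a -/b; [|exact: (proj1 P_pd)|lra].
set y := vtail x; set s := dot b y; set w := x ord0 + s / a.
have dot_x : dot x x = x ord0 * x ord0 + dot y y by rewrite /dot big_ord_recl.
have s_le : s / a * (s / a) <= dot b b / (a * a) * dot y y.
  have -> : s / a * (s / a) = (s * s) * / (a * a) by field; lra.
  have -> : dot b b / (a * a) * dot y y = (dot b b * dot y y) * / (a * a) by field; lra.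
  by apply: Rmult_le_compat_r; [apply/Rlt_le/Rinv_0_lt_compat; nra | exact: dot_sq_le].
have x0_le : x ord0 * x ord0 <= 2 * (w * w) + 2 * (s / a * (s / a)).
  have -> : x ord0 = w - s / a by rewrite /w; ring.
  by have := Rle_0_sqr (w + s / a); rewrite /Rsqr; lra.
have y_ge0 := dot_ge0 y.
have := schur_ge y; have : 0 <= w * w by nra.
have : (c * M) * dot y y <= c' * dot y y by apply: Rmult_le_compat_r.
rewrite dot_x /M; nra.
Qed.

(** * Frechet derivatives *)

Lemma vadd_vzero n (u : vec n) : vadd u vzero = u.
Proof. by apply: functional_extensionality => i; rewrite /vadd /vzero Rplus_0_r. Qed.

Lemma linear_vR_scale n (D : vec n -> R) : linear_vR D -> forall t v, D (vscale t v) = t * D v.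
Proof.
move=> D_lin t v.
have D0 : D vzero = 0.
  have := D_lin 1 vzero vzero; rewrite vadd_vzero.
  have -> : vscale 1 vzero = vzero :> vec n.
    by apply: functional_extensionality => i; rewrite /vscale /vzero; ring.
  lra.
by have := D_lin t v vzero; rewrite vadd_vzero D0 Rplus_0_r.
Qed.

Lemma linear_vv_scale n m (D : vec n -> vec m) : linear_vv D ->
  forall t v, D (vscale t v) = vscale t (D v).
Proof.
move=> D_lin t v; apply: functional_extensionality => i.
by apply: (@linear_vR_scale _ (fun w => D w i)) => c u w; exact: D_lin.
Qed.

(* Rescale v into the ball where the local bound holds. *)
Lemma homogeneous_le n (N : vec n -> R) K :
  (forall t v, 0 < t -> N (vscale t v) = t * N v) ->
  (forall eps, 0 < eps -> exists delta, 0 < delta /\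
     forall w, vnorm w < delta -> N w <= (K + eps) * vnorm w) ->
  forall v, N v <= K * vnorm v.
Proof.
move=> N_hom N_loc v; have v_ge0 := vnorm_ge0 v.
suff : N v - K * vnorm v <= 0 by lra.
apply: (Rle_0_of_le_pos_mul v_ge0) => eps eps_gt0.
have [delta [delta_gt0 N_le]] := N_loc _ eps_gt0.
set t := delta / (vnorm v + 1).
have t_gt0 : 0 < t by apply: Rdiv_lt_0_compat; lra.
have tv_lt : vnorm (vscale t v) < delta.
  rewrite vnorm_scale Rabs_right; last lra.
  have -> : t * vnorm v = delta * (vnorm v / (vnorm v + 1)) by rewrite /t; field; lra.
  by have := Rdiv_succ_lt1 v_ge0; nra.
have := N_le _ tv_lt; rewrite N_hom // vnorm_scale Rabs_right; last lra.
move=> Hle; suff : N v <= (K + eps) * vnorm v by lra.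
by apply: (Rmult_le_reg_l t) => //; lra.
Qed.

Lemma has_derivR_unique n (F : vec n -> R) x D1 D2 :
  has_derivR F x D1 -> has_derivR F x D2 -> forall v, D1 v = D2 v.
Proof.
move=> [D1_lin D1_approx] [D2_lin D2_approx] v.
suff : Rabs (D1 v - D2 v) <= 0 * vnorm v.
  by rewrite Rmult_0_l => H; apply: Rminus_diag_uniq; have := Rabs_pos (D1 v - D2 v);
     move: H; case: (Rcase_abs (D1 v - D2 v)) => [/Rabs_left -> | /Rabs_right ->]; lra.
apply: (@homogeneous_le _ (fun w => Rabs (D1 w - D2 w))) => {v} [t v t_gt0 | eps eps_gt0].
  by rewrite !linear_vR_scale // -Rmult_minus_distr_l Rabs_mult Rabs_right; lra.
have [d1 [d1_gt0 H1]] := D1_approx (eps / 2) ltac:(lra).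
have [d2 [d2_gt0 H2]] := D2_approx (eps / 2) ltac:(lra).
exists (Rmin d1 d2); split=> [|w w_lt]; first exact: Rmin_pos.
have := H1 w (Rlt_le_trans _ _ _ w_lt (Rmin_l _ _)).
have := H2 w (Rlt_le_trans _ _ _ w_lt (Rmin_r _ _)).
have := Rabs_triang (F (vadd x w) - F x - D2 w) (- (F (vadd x w) - F x - D1 w)).
rewrite Rabs_Ropp (_ : _ + - _ = D1 w - D2 w); last ring.
lra.
Qed.

Lemma has_derivR_lipschitz n (F : vec n -> R) x D L : has_derivR F x D ->
  (forall w, Rabs (F (vadd x w) - F x) <= L * vnorm w) ->
  forall v, Rabs (D v) <= L * vnorm v.
Proof.
move=> [D_lin D_approx] F_lip.
apply: (@homogeneous_le _ (fun w => Rabs (D w))) => [t v t_gt0 | eps eps_gt0].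
  by rewrite linear_vR_scale // Rabs_mult Rabs_right; lra.
have [d [d_gt0 Hd]] := D_approx _ eps_gt0; exists d; split=> // w w_lt.
have := Hd w w_lt; have := F_lip w.
have := Rabs_triang (F (vadd x w) - F x) (- (F (vadd x w) - F x - D w)).
rewrite Rabs_Ropp (_ : _ + - _ = D w); last ring.
lra.
Qed.

Lemma has_deriv_lipschitz n m (F : vec n -> vec m) x D L : has_deriv F x D ->
  (forall w, vnorm (vsub (F (vadd x w)) (F x)) <= L * vnorm w) ->
  forall v, vnorm (D v) <= L * vnorm v.
Proof.
move=> [D_lin D_approx] F_lip.
apply: (@homogeneous_le _ (fun w => vnorm (D w))) => [t v t_gt0 | eps eps_gt0].
  by rewrite linear_vv_scale // vnorm_scale Rabs_right; lra.
have [d [d_gt0 Hd]] := D_approx _ eps_gt0; exists d; split=> // w w_lt.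
have := Hd w w_lt; have := F_lip w.
have -> : vnorm (vsub (vsub (F (vadd x w)) (F x)) (D w))
          = vnorm (vsub (D w) (vsub (F (vadd x w)) (F x))).
  by rewrite -vnorm_opp; apply: vnorm_ext => i; rewrite /vopp /vsub; ring.
have := vnorm_le_sub (D w) (vsub (F (vadd x w)) (F x)).
lra.
Qed.

Lemma has_derivR_const n (c : R) (x : vec n) : has_derivR (fun=> c) x (fun=> 0).
Proof.
split=> [c' u v|eps eps_gt0]; first ring.
exists 1; split=> [|v _]; first lra.
rewrite (_ : c - c - 0 = 0) ?Rabs_R0; last ring.
by apply: Rmult_le_pos; [lra | exact: vnorm_ge0].
Qed.

Lemma vnorm_deriv_le n (e : vec n) Dn : has_derivR (@vnorm n) e Dn ->
  forall v, Dn v <= vnorm v.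
Proof.
move=> Dn_der v; apply: Rle_trans (Rle_abs _) _.
rewrite -[vnorm v]Rmult_1_l; apply: (has_derivR_lipschitz Dn_der) => w.
rewrite Rmult_1_l; apply: Rabs_le; split.
  have := vnorm_le_sub e (vadd e w).
  rewrite (@vnorm_ext _ (vsub e (vadd e w)) (vopp w)) ?vnorm_opp;
    last by move=> i; rewrite /vsub /vadd /vopp; ring.
  lra.
by have := vnorm_triang e w; lra.
Qed.

Section QuadraticForm.
Variables (n : nat) (P : mat n).
Hypothesis P_sym : forall i j, P i j = P j i.

Lemma quad_deriv x : has_derivR (quad P) x (fun v => 2 * bform P x v).
Proof.
split=> [c u v|eps eps_gt0]; first by rewrite bform_linr; ring.
have S_ge0 := mat_abs_sum_ge0 P.
exists (eps / (mat_abs_sum P + 1)); split=> [|v v_lt]; first by apply: Rdiv_lt_0_compat; lra.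
rewrite (quad_add P_sym) (_ : _ + _ + _ - _ - _ = quad P v); last ring.
apply: Rle_trans (Rabs_bform_le P v v) _.
have v_ge0 := vnorm_ge0 v.
have := Rmult_lt_of_lt_div v_lt ltac:(lra).
nra.
Qed.

Lemma quad_deriv_eq x D : has_derivR (quad P) x D -> forall v, D v = 2 * bform P x v.
Proof. by move=> D_der; apply: (has_derivR_unique D_der (quad_deriv x)). Qed.

Lemma quad_C1 : C1_R (quad P).
Proof.
exists (fun x v => 2 * bform P x v); split=> [|x eps eps_gt0]; first exact: quad_deriv.
have S_ge0 := mat_abs_sum_ge0 P.
exists (eps / (2 * mat_abs_sum P + 1)); split=> [|x' x'_near v].
  by apply: Rdiv_lt_0_compat; lra.
rewrite -Rmult_minus_distr_l -bform_subl Rabs_mult Rabs_right; last lra.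
have := Rabs_bform_le P (vsub x' x) v.
have := vnorm_ge0 v; have := vnorm_ge0 (vsub x' x).
have := Rmult_lt_of_lt_div x'_near ltac:(lra).
nra.
Qed.

End QuadraticForm.

Lemma C1_R2_const_l n1 n2 (F : vec n2 -> R) : C1_R F -> C1_R2 (fun (_ : vec n1) y => F y).
Proof.
move=> [DF [DF_der DF_cont]]; exists (fun _ y _ b => DF y b); split=> [x y|x y eps eps_gt0].
  have [DF_lin DF_approx] := DF_der y; split=> [c a b a' b'|eps eps_gt0]; first exact: DF_lin.
  have [d [d_gt0 Hd]] := DF_approx _ eps_gt0; exists d; split=> // a b ab_lt.
  have := norm2_ge_r a b; have := Hd b ltac:(have := norm2_ge_r a b; lra).
  by have := vnorm_ge0 b; nra.
have [d [d_gt0 Hd]] := DF_cont y _ eps_gt0; exists d; split=> // x' y' near a b.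
have := Hd y' ltac:(have := norm2_ge_r (vsub x' x) (vsub y' y); lra) b.
by have := norm2_ge_r a b; nra.
Qed.

Lemma sq_derivable_pt_lim c s : derivable_pt_lim (fun s => c * s ^ 2) s (c * (INR 2 * s ^ 1)).
Proof. exact: derivable_pt_lim_scal (derivable_pt_lim_pow s 2). Qed.

Lemma C1_fun_sq c : Defs.C1_fun (fun s => c * s ^ 2).
Proof.
exists (fun s => c * (INR 2 * s ^ 1)); split=> [s|]; first exact: sq_derivable_pt_lim.
by move=> s; reg.
Qed.

Lemma Kinf_sq c : 0 < c -> Kinf (fun s => c * s ^ 2).
Proof.
move=> c_gt0; split; first ring.
split=> [s _|]; first by apply: Rmult_le_pos; [lra | exact: pow2_ge_0].
split=> [s t s_ge0 st|]; first by apply: Rmult_lt_compat_l => //; nra.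
split=> [s _ eps eps_gt0|M].
  have [alp [alp_gt0 Halp]] :=
    derivable_continuous_pt _ _ (exist _ _ (sq_derivable_pt_lim c s)) eps eps_gt0.
  exists alp; split=> // t _ ts_lt.
  have [->|ts_neq] := Req_dec t s; first by rewrite Rminus_diag Rabs_R0.
  by apply: Halp; split; [split=> //; auto | exact: ts_lt].
have M_ge0 : 0 <= Rabs M / c by apply: Rdiv_le_0_compat => //; exact: Rabs_pos.
exists (Rabs M / c + 1); split; first lra.
have E : c * (Rabs M / c) = Rabs M by field; lra.
have := Rmult_le_pos _ _ (Rabs_pos M) M_ge0; have := Rle_abs M.
by rewrite /= Rmult_1_r; nra.
Qed.

Lemma quad_Kinf_bounds n (P : mat n) c : 0 < c -> coercive P c ->
  exists aL aU, Kinf aL /\ Kinf aU /\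
     forall x, aL (vnorm x) <= quad P x /\ quad P x <= aU (vnorm x).
Proof.
move=> c_gt0 quad_ge; exists (fun s => c * s ^ 2), (fun s => (mat_abs_sum P + 1) * s ^ 2).
have S_ge0 := mat_abs_sum_ge0 P.
do 2 (split; first by apply: Kinf_sq; lra).
move=> x; rewrite /= Rmult_1_r vnorm_sq; split; first exact: quad_ge.
by have := quad_le P x; have := dot_ge0 x; rewrite -vnorm_sq; nra.
Qed.

Lemma quad_ge0 n (P : mat n) c : 0 < c -> coercive P c -> forall x, 0 <= quad P x.
Proof. by move=> c_gt0 P_coer x; have := P_coer x; have := dot_ge0 x; nra. Qed.

Lemma sqrt_quad_ge n (P : mat n) c : 0 < c -> coercive P c ->
  forall x, sqrt c * vnorm x <= sqrt (quad P x).
Proof.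
move=> c_gt0 P_coer x; rewrite /vnorm -sqrt_mult; [|lra|exact: dot_ge0].
by apply: sqrt_le_1_alt; exact: P_coer.
Qed.

(* Test the dissipativity at x = t F(0) and let t -> 0+. *)
Lemma dissipative_vanishes_at0 n (P : mat n) (F : vec n -> vec n) c L :
  0 < c -> coercive P c -> 0 <= L ->
  (forall x, bform P x (F x) <= 0) ->
  (forall x x', vnorm (vsub (F x) (F x')) <= L * vnorm (vsub x x')) ->
  vnorm (F vzero) = 0.
Proof.
move=> c_gt0 P_coer L_ge0 F_diss F_lip; set F0 := F vzero.
have S_ge0 := mat_abs_sum_ge0 P; have F0_ge0 := vnorm_ge0 F0.
set K := mat_abs_sum P * vnorm F0 * (L * vnorm F0).
have K_ge0 : 0 <= K by rewrite /K; apply: Rmult_le_pos; apply: Rmult_le_pos => //.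
have near0 t : 0 < t -> bform P F0 F0 <= t * K.
  move=> t_gt0; have := F_diss (vscale t F0); rewrite bform_scalel => Ht.
  have Hneg : bform P F0 (F (vscale t F0)) <= 0.
    by apply: Rnot_lt_le => Hlt; have := Rmult_lt_0_compat _ _ t_gt0 Hlt; lra.
  have := Rabs_bform_le P F0 (vsub (F (vscale t F0)) F0); rewrite bform_subr.
  have : vnorm (vsub (F (vscale t F0)) F0) <= L * (t * vnorm F0).
    by have := F_lip (vscale t F0) vzero; rewrite vnorm_sub0 vnorm_scale Rabs_right //; lra.
  move=> Hlip Hb; have := Rle_abs (- (bform P F0 (F (vscale t F0)) - bform P F0 F0)).
  rewrite Rabs_Ropp => Habs.
  have : mat_abs_sum P * vnorm F0 * vnorm (vsub (F (vscale t F0)) F0)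
         <= mat_abs_sum P * vnorm F0 * (L * (t * vnorm F0)).
    by apply: Rmult_le_compat_l => //; apply: Rmult_le_pos.
  by rewrite /K; lra.
have quad_le0 : quad P F0 <= 0 := Rle_0_of_le_pos_mul K_ge0 near0.
have : dot F0 F0 = 0 by have := P_coer F0; have := dot_ge0 F0; nra.
by rewrite /vnorm => ->; exact: sqrt_0.
Qed.

(** * The plant *)

Lemma Young_sq a q X E : 0 < a -> 2 * q * X * E <= a * (X * X) + q * q / a * (E * E).
Proof.
move=> a_gt0; apply: (Rmult_le_reg_l a) => //.
have -> : a * (a * (X * X) + q * q / a * (E * E)) = a * a * (X * X) + q * q * (E * E).
  by field; lra.
by have := Rle_0_sqr (a * X - q * E); rewrite /Rsqr; nra.
Qed.

Lemma Rmult_le_scaled K a b r s A B : 0 <= K -> 0 <= a -> 0 <= b -> 0 < r -> 0 < s ->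
  r * a <= A -> s * b <= B -> K * (a * b) <= K / (r * s) * (A * B).
Proof.
move=> K_ge0 a_ge0 b_ge0 r_gt0 s_gt0 HA HB.
have -> : K * (a * b) = K / (r * s) * ((r * a) * (s * b)) by field; lra.
apply: Rmult_le_compat_l; first by apply: Rdiv_le_0_compat => //; nra.
by apply: Rmult_le_compat => //; nra.
Qed.

Section Proposition1.
Variables (nx nz nu : nat).
Variables (f : vec nx -> vec nz -> vec nu -> vec nx) (g : vec nx -> vec nz -> vec nu -> vec nz)
          (h : vec nx -> vec nu -> vec nz) (k : vec nx -> vec nu).
Variables (P1 : mat nx) (P2 : mat nz) (abar1 alpha2 c1 c2 Lf Lh Lk : R).
Hypotheses (Lf_ge0 : 0 <= Lf) (Lh_ge0 : 0 <= Lh) (Lk_ge0 : 0 <= Lk).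
Hypothesis f_lip : forall x z u x' z' u',
  vnorm (vsub (f x z u) (f x' z' u')) <= Lf * norm3 (vsub x x') (vsub z z') (vsub u u').
Hypothesis h_lip : forall x u x' u',
  vnorm (vsub (h x u) (h x' u')) <= Lh * norm2 (vsub x x') (vsub u u').
Hypothesis k_lip : forall x x', vnorm (vsub (k x) (k x')) <= Lk * vnorm (vsub x x').

Lemma h_shift_le x e : vnorm (vsub (h x (k (vadd x e))) (h x (k x))) <= Lh * Lk * vnorm e.
Proof.
apply: Rle_trans (h_lip _ _ _ _) _; rewrite Rmult_assoc; apply: Rmult_le_compat_l => //.
apply: Rle_trans (norm2_le _ _) _; rewrite vnorm_sub_self Rplus_0_l.
by apply: Rle_trans (k_lip _ _) _; rewrite vnorm_addKl; lra.
Qed.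

Lemma f_s_perturb_le x e :
  vnorm (vsub (f_s f h k x e) (f_s f h k x vzero)) <= Lf * (Lh * Lk + Lk) * vnorm e.
Proof.
rewrite /f_s vadd_vzero; apply: Rle_trans (f_lip _ _ _ _ _ _) _.
rewrite Rmult_assoc; apply: Rmult_le_compat_l => //.
apply: Rle_trans (norm3_le _ _ _) _; rewrite vnorm_sub_self.
have := h_shift_le x e.
have : vnorm (vsub (k (vadd x e)) (k x)) <= Lk * vnorm e.
  by apply: Rle_trans (k_lip _ _) _; rewrite vnorm_addKl; lra.
lra.
Qed.

Lemma f_s0_lipschitz x x' : vnorm (vsub (f_s f h k x vzero) (f_s f h k x' vzero))
  <= Lf * (1 + Lh * (1 + Lk) + Lk) * vnorm (vsub x x').
Proof.
rewrite /f_s !vadd_vzero; apply: Rle_trans (f_lip _ _ _ _ _ _) _.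
rewrite Rmult_assoc; apply: Rmult_le_compat_l => //.
apply: Rle_trans (norm3_le _ _ _) _.
have := vnorm_ge0 (vsub x x'); have HK := k_lip x x'.
have : vnorm (vsub (h x (k x)) (h x' (k x'))) <= Lh * (vnorm (vsub x x') + Lk * vnorm (vsub x x')).
  apply: Rle_trans (h_lip _ _ _ _) _; apply: Rmult_le_compat_l => //.
  by apply: Rle_trans (norm2_le _ _) _; lra.
nra.
Qed.

Lemma f_x_f_s_le x y e : vnorm (vsub (f_x f h k x y e) (f_s f h k x e)) <= Lf * vnorm y.
Proof.
apply: Rle_trans (f_lip _ _ _ _ _ _) _; apply: Rmult_le_compat_l => //.
by apply: Rle_trans (norm3_le _ _ _) _; rewrite !vnorm_sub_self vnorm_addKr; lra.
Qed.

Lemma f_x_f_s00_le x y e :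
  vnorm (vsub (f_x f h k x y e) (f_s f h k vzero vzero)) <=
  Lf * (1 + Lh + Lh * Lk + Lk) * (vnorm x + vnorm y + vnorm e).
Proof.
rewrite /f_x /f_s !vadd_vzero; apply: Rle_trans (f_lip _ _ _ _ _ _) _.
rewrite Rmult_assoc; apply: Rmult_le_compat_l => //.
apply: Rle_trans (norm3_le _ _ _) _; rewrite vnorm_sub0.
have := vnorm_ge0 x; have := vnorm_ge0 y; have := vnorm_ge0 e.
have HK : vnorm (vsub (k (vadd x e)) (k vzero)) <= Lk * (vnorm x + vnorm e).
  apply: Rle_trans (k_lip _ _) _; apply: Rmult_le_compat_l => //.
  by rewrite -[vzero](vadd_vzero vzero); apply: Rle_trans (vnorm_sub_add _ _ _ _) _;
     rewrite !vnorm_sub0; lra.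
have HH : vnorm (vsub (h x (k (vadd x e))) (h vzero (k vzero)))
          <= Lh * (vnorm x + Lk * (vnorm x + vnorm e)).
  apply: Rle_trans (h_lip _ _ _ _) _; apply: Rmult_le_compat_l => //.
  by apply: Rle_trans (norm2_le _ _) _; rewrite vnorm_sub0; lra.
have : vnorm (vsub (vadd y (h x (k (vadd x e)))) (h vzero (k vzero)))
       <= vnorm y + Lh * (vnorm x + Lk * (vnorm x + vnorm e)).
  rewrite (@vnorm_ext _ _ (vadd y (vsub (h x (k (vadd x e))) (h vzero (k vzero)))));
    last by move=> i; rewrite /vadd /vsub; ring.
  by apply: Rle_trans (vnorm_triang _ _) _; lra.
have := Rmult_le_pos _ _ Lh_ge0 Lk_ge0.
nra.
Qed.

Hypotheses (P1_sym : forall i j, P1 i j = P1 j i) (P2_sym : forall i j, P2 i j = P2 j i).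
Hypotheses (c1_gt0 : 0 < c1) (c2_gt0 : 0 < c2).
Hypotheses (P1_coer : coercive P1 c1) (P2_coer : coercive P2 c2).
Hypotheses (abar1_gt0 : 0 < abar1) (alpha2_gt0 : 0 < alpha2).
Hypothesis Vx_decay : forall x DVx, has_derivR (quad P1) x DVx ->
  DVx (f_s f h k x vzero) <= - abar1 * quad P1 x.
Hypothesis Vy_decay : forall x y e DyVy, has_derivR (fun y' => quad P2 y') y DyVy ->
  DyVy (g_f g h k x y e) <= - alpha2 * quad P2 y.

Definition f_x_gain : R := Lf * (1 + Lh + Lh * Lk + Lk).

(* gbar1 is the Young constant of [Vx_deriv_f_s_le]; the [+ 1]s keep the gains positive, as
   [Kinf] requires. *)
Definition gbar1 : R := 2 * (mat_abs_sum P1 * (Lf * (Lh * Lk + Lk))) ^ 2 / (abar1 * c1) + 1.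

Definition gbar2 : R := mat_abs_sum P2 * Lh * f_x_gain + 1.

Let S1_ge0 := mat_abs_sum_ge0 P1.
Let S2_ge0 := mat_abs_sum_ge0 P2.
Let sqrt_c1_gt0 := sqrt_lt_R0 _ c1_gt0.
Let sqrt_c2_gt0 := sqrt_lt_R0 _ c2_gt0.
Let Vx_ge0 := quad_ge0 c1_gt0 P1_coer.
Let Vy_ge0 := quad_ge0 c2_gt0 P2_coer.
Let sqrt_Vx_ge := sqrt_quad_ge c1_gt0 P1_coer.
Let sqrt_Vy_ge := sqrt_quad_ge c2_gt0 P2_coer.
Let f_x_gain_ge0 : 0 <= f_x_gain.
Proof. by apply: Rmult_le_pos => //; have := Rmult_le_pos _ _ Lh_ge0 Lk_ge0; lra. Qed.

Lemma gbar1_gt0 : 0 < gbar1.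
Proof.
have : 0 <= 2 * (mat_abs_sum P1 * (Lf * (Lh * Lk + Lk))) ^ 2 / (abar1 * c1).
  apply: Rdiv_le_0_compat; last nra.
  by have := pow2_ge_0 (mat_abs_sum P1 * (Lf * (Lh * Lk + Lk))); lra.
by rewrite /gbar1; lra.
Qed.

Lemma gbar2_gt0 : 0 < gbar2.
Proof.
have : 0 <= mat_abs_sum P2 * Lh * f_x_gain by apply: Rmult_le_pos => //; apply: Rmult_le_pos.
by rewrite /gbar2; lra.
Qed.

Lemma f_s_origin : vnorm (f_s f h k vzero vzero) = 0.
Proof.
apply: (@dissipative_vanishes_at0 _ P1 (fun x => f_s f h k x vzero) c1
          (Lf * (1 + Lh * (1 + Lk) + Lk))) => // [|x|x x'].
- by apply: Rmult_le_pos => //; have := Rmult_le_pos _ _ Lh_ge0 Lk_ge0; lra.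
- have := Vx_decay (quad_deriv P1_sym x); have := Vx_ge0 x; nra.
- exact: f_s0_lipschitz.
Qed.

Lemma f_x_le x y e : vnorm (f_x f h k x y e) <= f_x_gain * (vnorm x + vnorm y + vnorm e).
Proof.
have := vnorm_le_sub (f_x f h k x y e) (f_s f h k vzero vzero).
by rewrite f_s_origin /f_x_gain; have := f_x_f_s00_le x y e; lra.
Qed.

Lemma Vx_deriv_f_s_le x e :
  2 * bform P1 x (f_s f h k x e) <= - (abar1 / 2) * quad P1 x + gbar1 * vnorm e ^ 2.
Proof.
set A := Lf * (Lh * Lk + Lk); set q := mat_abs_sum P1 * A; set a := abar1 * c1 / 2.
have decay := Vx_decay (quad_deriv P1_sym x); rewrite /= in decay.
have := Rabs_bform_le P1 x (vsub (f_s f h k x e) (f_s f h k x vzero)).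
rewrite bform_subr; move/(Rle_trans _ _ _ (Rle_abs _)) => perturb.
have x_ge0 := vnorm_ge0 x; have e_ge0 := vnorm_ge0 e.
have : mat_abs_sum P1 * vnorm x * vnorm (vsub (f_s f h k x e) (f_s f h k x vzero))
       <= q * vnorm x * vnorm e.
  have := f_s_perturb_le x e; rewrite -/A => Hp.
  have -> : q * vnorm x * vnorm e = mat_abs_sum P1 * vnorm x * (A * vnorm e) by rewrite /q; ring.
  by apply: Rmult_le_compat_l => //; apply: Rmult_le_pos.
have a_gt0 : 0 < a by rewrite /a; nra.
have young := Young_sq q (vnorm x) (vnorm e) a_gt0.
have : a * (vnorm x * vnorm x) <= abar1 / 2 * quad P1 x.
  have := P1_coer x; rewrite -vnorm_sq /a => Hc.
  have -> : abar1 * c1 / 2 * (vnorm x * vnorm x) = abar1 / 2 * (c1 * (vnorm x * vnorm x)) by field.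
  by apply: Rmult_le_compat_l; lra.
have : q * q / a * (vnorm e * vnorm e) <= gbar1 * vnorm e ^ 2.
  have -> : q * q / a = 2 * q ^ 2 / (abar1 * c1) by rewrite /a; field; lra.
  by rewrite /gbar1 -/A -/q /= Rmult_1_r; nra.
lra.
Qed.

Lemma Assumption_A2_holds :
  Assumption_A2 f h k (quad P1) (abar1 / 2) (fun s => gbar1 * s ^ 2).
Proof.
split; first exact: quad_C1.
split; first exact: Vx_ge0.
split; first exact: quad_Kinf_bounds c1_gt0 P1_coer.
split; first exact: Kinf_sq gbar1_gt0.
split; first exact: C1_fun_sq.
split=> [|x e D D_der]; first lra.
rewrite (quad_deriv_eq P1_sym D_der); exact: Vx_deriv_f_s_le.
Qed.

Lemma Assumption_A3_holds : Assumption_A3 g h k (fun _ y => quad P2 y).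
Proof.
split; first exact: C1_R2_const_l (quad_C1 P2_sym).
split=> [x|]; first exact: Vy_ge0.
have [aL [aU [aL_Kinf [aU_Kinf bounds]]]] := quad_Kinf_bounds c2_gt0 P2_coer.
by exists aL, aU, alpha2.
Qed.

Lemma Vx_deriv_f_x_f_s_le x y e :
  2 * bform P1 x (vsub (f_x f h k x y e) (f_s f h k x e))
  <= (2 * mat_abs_sum P1 * Lf / (sqrt c1 * sqrt c2) + 1) * sqrt (quad P1 x * quad P2 y).
Proof.
have x_ge0 := vnorm_ge0 x; have y_ge0 := vnorm_ge0 y.
have := Rabs_bform_le P1 x (vsub (f_x f h k x y e) (f_s f h k x e)).
have := Rle_abs (bform P1 x (vsub (f_x f h k x y e) (f_s f h k x e))).
have : mat_abs_sum P1 * vnorm x * vnorm (vsub (f_x f h k x y e) (f_s f h k x e))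
       <= mat_abs_sum P1 * vnorm x * (Lf * vnorm y).
  by apply: Rmult_le_compat_l; [apply: Rmult_le_pos | exact: f_x_f_s_le].
have S1Lf_ge0 : 0 <= 2 * mat_abs_sum P1 * Lf by have := Rmult_le_pos _ _ S1_ge0 Lf_ge0; lra.
have := Rmult_le_scaled S1Lf_ge0
  x_ge0 y_ge0 sqrt_c1_gt0 sqrt_c2_gt0 (sqrt_Vx_ge x) (sqrt_Vy_ge y).
rewrite -(sqrt_mult _ _ (Vx_ge0 x) (Vy_ge0 y)).
have := sqrt_pos (quad P1 x * quad P2 y).
nra.
Qed.

Lemma Vy_deriv_f_x_le x y e Jh :
  has_deriv (fun x' => h x' (k (vadd x e))) x Jh ->
  - (2 * bform P2 y (Jh (f_x f h k x y e)))
  <= (2 * mat_abs_sum P2 * Lh * f_x_gain / (sqrt c1 * sqrt c2) + 1) * sqrt (quad P1 x * quad P2 y)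
     + (3 * mat_abs_sum P2 * Lh * f_x_gain / c2 + 1) * quad P2 y + gbar2 * vnorm e ^ 2.
Proof.
move=> Jh_der; set w := f_x f h k x y e; set K := 2 * mat_abs_sum P2 * Lh * f_x_gain.
have K_ge0 : 0 <= K.
  by rewrite /K; have := Rmult_le_pos _ _ (Rmult_le_pos _ _ S2_ge0 Lh_ge0) f_x_gain_ge0; lra.
have x_ge0 := vnorm_ge0 x; have y_ge0 := vnorm_ge0 y; have e_ge0 := vnorm_ge0 e.
have Jw_le : vnorm (Jh w) <= Lh * (f_x_gain * (vnorm x + vnorm y + vnorm e)).
  apply: Rle_trans (has_deriv_lipschitz (L := Lh) Jh_der _ w) _ => [v|].
    apply: Rle_trans (h_lip _ _ _ _) _; rewrite norm2_0r ?vnorm_addKl; first lra.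
    by move=> i; rewrite /vsub; ring.
  by apply: Rmult_le_compat_l => //; exact: f_x_le.
have := Rabs_bform_le P2 y (Jh w); have := Rle_abs (- bform P2 y (Jh w)); rewrite Rabs_Ropp.
have : mat_abs_sum P2 * vnorm y * vnorm (Jh w)
       <= mat_abs_sum P2 * vnorm y * (Lh * (f_x_gain * (vnorm x + vnorm y + vnorm e))).
  by apply: Rmult_le_compat_l => //; apply: Rmult_le_pos.
have := Rmult_le_scaled K_ge0 x_ge0 y_ge0 sqrt_c1_gt0 sqrt_c2_gt0
  (sqrt_Vx_ge x) (sqrt_Vy_ge y).
rewrite -(sqrt_mult _ _ (Vx_ge0 x) (Vy_ge0 y)).
have : 3 * K / 2 * (vnorm y * vnorm y) <= 3 * mat_abs_sum P2 * Lh * f_x_gain / c2 * quad P2 y.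
  have := P2_coer y; rewrite -vnorm_sq => Hc.
  have -> : 3 * K / 2 * (vnorm y * vnorm y)
            = 3 * mat_abs_sum P2 * Lh * f_x_gain / c2 * (c2 * (vnorm y * vnorm y)).
    by rewrite /K; field; lra.
  by apply: Rmult_le_compat_l => //; apply: Rdiv_le_0_compat => //; rewrite /K in K_ge0; lra.
have : 0 <= K * ((vnorm y - vnorm e) * (vnorm y - vnorm e)).
  by apply: Rmult_le_pos => //; exact: Rle_0_sqr.
have := sqrt_pos (quad P1 x * quad P2 y); have := Vy_ge0 y.
have -> : gbar2 = K / 2 + 1 by rewrite /gbar2 /K; field.
have : 2 * (mat_abs_sum P2 * vnorm y * (Lh * (f_x_gain * (vnorm x + vnorm y + vnorm e))))
          = K * (vnorm x * vnorm y) + K * (vnorm y * vnorm y) + K * (vnorm y * vnorm e).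
  by rewrite /K; ring.
rewrite /= Rmult_1_r -/K.
nra.
Qed.

Lemma Assumption_A4_holds : Assumption_A4 f h k (quad P1) (fun _ y => quad P2 y)
  (fun s => gbar1 * s ^ 2) (fun s => gbar2 * s ^ 2).
Proof.
split; first exact: Kinf_sq gbar2_gt0.
split; last first.
  exists (gbar2 / gbar1); split=> [|s _ _ <-]; first exact: Rdiv_lt_0_compat gbar2_gt0 gbar1_gt0.
  by right; field; apply: Rgt_not_eq; exact: gbar1_gt0.
have pos K : 0 <= K -> 0 < K + 1 by lra.
exists (2 * mat_abs_sum P1 * Lf / (sqrt c1 * sqrt c2) + 1),
       (2 * mat_abs_sum P2 * Lh * f_x_gain / (sqrt c1 * sqrt c2) + 1),
       (3 * mat_abs_sum P2 * Lh * f_x_gain / c2 + 1).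
have S1Lf := Rmult_le_pos _ _ S1_ge0 Lf_ge0.
have S2Lh := Rmult_le_pos _ _ (Rmult_le_pos _ _ S2_ge0 Lh_ge0) f_x_gain_ge0.
split; first by apply: pos; apply: Rdiv_le_0_compat; [lra | nra].
split; first by apply: pos; apply: Rdiv_le_0_compat; [lra | nra].
split; first by apply: pos; apply: Rdiv_le_0_compat; lra.
split=> [x y e D D_der|x y e DxVy DyVy Jh DxVy_der DyVy_der Jh_der].
  by rewrite (quad_deriv_eq P1_sym D_der); exact: Vx_deriv_f_x_f_s_le.
rewrite (has_derivR_unique DxVy_der (has_derivR_const (quad P2 y) x)).
rewrite (quad_deriv_eq P2_sym DyVy_der) Rminus_0_l.
exact: Vy_deriv_f_x_le.
Qed.

Lemma Vy_h_y_le x y e :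
  quad P2 (h_y h k x y e)
  <= quad P2 y + (mat_abs_sum P2 * (Lh * Lk) ^ 2 / gbar1 + 1) * (gbar1 * vnorm e ^ 2)
     + (2 * mat_abs_sum P2 * (Lh * Lk) / (sqrt gbar1 * sqrt c2) + 1)
       * sqrt (gbar1 * vnorm e ^ 2 * quad P2 y).
Proof.
set m := Lh * Lk; set d := vsub (h x (k (vadd x e))) (h x (k x)).
have m_ge0 : 0 <= m by apply: Rmult_le_pos.
have g1_gt0 := gbar1_gt0; have sqrt_g1_gt0 := sqrt_lt_R0 _ g1_gt0.
have y_ge0 := vnorm_ge0 y; have e_ge0 := vnorm_ge0 e; have d_ge0 := vnorm_ge0 d.
have d_le : vnorm d <= m * vnorm e := h_shift_le x e.
have -> : quad P2 (h_y h k x y e) = quad P2 (fun i => y i + d i).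
  by apply: bform_ext => i; rewrite /h_y /d /vsub /vadd; ring.
rewrite (quad_add P2_sym).
have quad_d : quad P2 d <= mat_abs_sum P2 * m ^ 2 / gbar1 * (gbar1 * vnorm e ^ 2).
  apply: Rle_trans (quad_le P2 d) _.
  have -> : mat_abs_sum P2 * m ^ 2 / gbar1 * (gbar1 * vnorm e ^ 2)
            = mat_abs_sum P2 * ((m * vnorm e) * (m * vnorm e)) by field; lra.
  by apply: Rmult_le_compat_l => //; apply: Rmult_le_compat.
have cross : 2 * bform P2 y d <= 2 * mat_abs_sum P2 * m * (vnorm e * vnorm y).
  have := Rabs_bform_le P2 y d; have := Rle_abs (bform P2 y d).
  have : mat_abs_sum P2 * vnorm y * vnorm d <= mat_abs_sum P2 * vnorm y * (m * vnorm e).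
    by apply: Rmult_le_compat_l => //; apply: Rmult_le_pos.
  lra.
have := Rmult_le_scaled (K := 2 * mat_abs_sum P2 * m)
  ltac:(have := Rmult_le_pos _ _ S2_ge0 m_ge0; lra) e_ge0 y_ge0 sqrt_g1_gt0 sqrt_c2_gt0
  (Rle_refl (sqrt gbar1 * vnorm e)) (sqrt_Vy_ge y).
have ge_ge0 : 0 <= gbar1 * vnorm e ^ 2 by apply: Rmult_le_pos; [lra | exact: pow2_ge_0].
rewrite (sqrt_mult _ _ ge_ge0 (Vy_ge0 y)) (sqrt_mult _ _ (Rlt_le _ _ g1_gt0) (pow2_ge_0 _)).
rewrite sqrt_pow2 //.
have := Rmult_le_pos _ _ (Rmult_le_pos _ _ (Rlt_le _ _ sqrt_g1_gt0) e_ge0) (sqrt_pos (quad P2 y)).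
nra.
Qed.

Lemma Assumption_A5_holds : Assumption_A5 h k (fun _ y => quad P2 y) (fun s => gbar1 * s ^ 2).
Proof.
have m_ge0 := Rmult_le_pos _ _ Lh_ge0 Lk_ge0.
exists (mat_abs_sum P2 * (Lh * Lk) ^ 2 / gbar1 + 1),
       (2 * mat_abs_sum P2 * (Lh * Lk) / (sqrt gbar1 * sqrt c2) + 1).
have sqrt_g1_gt0 := sqrt_lt_R0 _ gbar1_gt0.
split.
  have : 0 <= mat_abs_sum P2 * (Lh * Lk) ^ 2 / gbar1.
    by apply: Rdiv_le_0_compat; [apply: Rmult_le_pos => //; exact: pow2_ge_0 | exact: gbar1_gt0].
  lra.
split; last exact: Vy_h_y_le.
have : 0 <= 2 * mat_abs_sum P2 * (Lh * Lk) / (sqrt gbar1 * sqrt c2).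
  by apply: Rdiv_le_0_compat; [have := Rmult_le_pos _ _ S2_ge0 m_ge0; lra | nra].
lra.
Qed.

Lemma Assumption_A6_holds : Assumption_A6 f h k (quad P1) (fun _ y => quad P2 y).
Proof.
exists f_x_gain, (f_x_gain / sqrt c1 + f_x_gain / sqrt c2).
have N1 : 0 <= f_x_gain / sqrt c1 by exact: Rdiv_le_0_compat.
have N2 : 0 <= f_x_gain / sqrt c2 by exact: Rdiv_le_0_compat.
split=> //; split=> [|x y e Dn Dn_der]; first lra.
apply: Rle_trans (vnorm_deriv_le Dn_der _) _; rewrite vnorm_opp.
apply: Rle_trans (f_x_le x y e) _.
have scaled r z V : 0 < r -> r * z <= V -> f_x_gain * z <= f_x_gain / r * V.
  move=> r_gt0 Hz; have -> : f_x_gain * z = f_x_gain / r * (r * z) by field; lra.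
  by apply: Rmult_le_compat_l => //; exact: Rdiv_le_0_compat.
have := scaled _ _ _ sqrt_c1_gt0 (sqrt_Vx_ge x).
have := scaled _ _ _ sqrt_c2_gt0 (sqrt_Vy_ge y).
have := Rmult_le_pos _ _ N1 (sqrt_pos (quad P2 y)).
have := Rmult_le_pos _ _ N2 (sqrt_pos (quad P1 x)).
lra.
Qed.

End Proposition1.

Lemma lipschitz1_nonneg n m (F : vec n -> vec m) : lipschitz1 F ->
  exists L, 0 <= L /\ forall x x', vnorm (vsub (F x) (F x')) <= L * vnorm (vsub x x').
Proof.
move=> [L F_lip]; exists (Rabs L); split=> [|x x']; first exact: Rabs_pos.
by apply: Rle_trans (F_lip x x') _; apply: Rmult_le_compat_r; [exact: vnorm_ge0 | exact: Rle_abs].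
Qed.

Lemma lipschitz2_nonneg n1 n2 m (F : vec n1 -> vec n2 -> vec m) : lipschitz2 F ->
  exists L, 0 <= L /\ forall x u x' u',
    vnorm (vsub (F x u) (F x' u')) <= L * norm2 (vsub x x') (vsub u u').
Proof.
move=> [L F_lip]; exists (Rabs L); split=> [|x u x' u']; first exact: Rabs_pos.
apply: Rle_trans (F_lip x u x' u') _.
by apply: Rmult_le_compat_r; [exact: sqrt_pos | exact: Rle_abs].
Qed.

Lemma lipschitz3_nonneg n1 n2 n3 m (F : vec n1 -> vec n2 -> vec n3 -> vec m) : lipschitz3 F ->
  exists L, 0 <= L /\ forall x z u x' z' u',
    vnorm (vsub (F x z u) (F x' z' u')) <= L * norm3 (vsub x x') (vsub z z') (vsub u u').
Proof.
move=> [L F_lip]; exists (Rabs L); split=> [|x z u x' z' u']; first exact: Rabs_pos.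
apply: Rle_trans (F_lip x z u x' z' u') _.
by apply: Rmult_le_compat_r; [exact: sqrt_pos | exact: Rle_abs].
Qed.

Unset Implicit Arguments.

Theorem proposition1 (nx nz nu : nat)
  (f : vec nx -> vec nz -> vec nu -> vec nx)
  (g : vec nx -> vec nz -> vec nu -> vec nz)
  (k : vec nx -> vec nu) (eps : R)
  (h : vec nx -> vec nu -> vec nz)
  (P1 : mat nx) (P2 : mat nz) (abar1 alpha2 : R) :
  0 < eps ->
  lipschitz3 f -> lipschitz3 g -> lipschitz1 k ->
  Assumption_A1 g h -> lipschitz2 h ->
  sym_posdef P1 -> sym_posdef P2 -> 0 < abar1 -> 0 < alpha2 ->
  (forall x DVx, has_derivR (quad P1) x DVx ->
     DVx (f_s f h k x vzero) <= - abar1 * quad P1 x) ->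
  (forall x y e DyVy, has_derivR (fun y' => quad P2 y') y DyVy ->
     DyVy (g_f g h k x y e) <= - alpha2 * quad P2 y) ->
  exists gbar1 gbar2 : R, 0 <= gbar1 /\ 0 <= gbar2 /\
    Assumption_A2 f h k (quad P1) (abar1 / 2) (fun s => gbar1 * s ^ 2) /\
    Assumption_A3 g h k (fun _ y => quad P2 y) /\
    Assumption_A4 f h k (quad P1) (fun _ y => quad P2 y)
       (fun s => gbar1 * s ^ 2) (fun s => gbar2 * s ^ 2) /\
    Assumption_A5 h k (fun _ y => quad P2 y) (fun s => gbar1 * s ^ 2) /\
    Assumption_A6 f h k (quad P1) (fun _ y => quad P2 y).
Proof.
move=> _ f_lip _ k_lip _ h_lip P1_pd P2_pd abar1_gt0 alpha2_gt0 Vx_decay Vy_decay.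
have [Lf [Lf_ge0 {}f_lip]] := lipschitz3_nonneg f_lip.
have [Lh [Lh_ge0 {}h_lip]] := lipschitz2_nonneg h_lip.
have [Lk [Lk_ge0 {}k_lip]] := lipschitz1_nonneg k_lip.
have [c1 [c1_gt0 P1_coer]] := quad_coercive P1_pd.
have [c2 [c2_gt0 P2_coer]] := quad_coercive P2_pd.
have [[P1_sym _] [P2_sym _]] := (P1_pd, P2_pd).
exists (gbar1 P1 abar1 c1 Lf Lh Lk), (gbar2 P2 Lf Lh Lk).
split; first by apply/Rlt_le/gbar1_gt0.
split; first by apply/Rlt_le/gbar2_gt0.
split; first by apply: Assumption_A2_holds.
split; first by apply: (Assumption_A3_holds (alpha2 := alpha2) (c2 := c2)).
split; first by apply: (Assumption_A4_holds (c2 := c2)).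
split; first by apply: (Assumption_A5_holds (c2 := c2) P1 Lf).
by apply: (Assumption_A6_holds (abar1 := abar1) (c1 := c1) (c2 := c2)
             (Lf := Lf) (Lh := Lh) (Lk := Lk)).
Qed.
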